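(* Let $\theta=\frac{a}{b}$ with $a,b$ positive integers, $a>b$. Let $w$ be a positive function on $(0,+\infty)$ such that $x^kw(x)$ is integrable on $(0,+\infty)$ for every integer $k\geq 0$, and let $p_j,q_j$ ($j=0,1,2,\dots$) be the biorthogonal polynomials defined in the context. Then there exist real coefficients $u_0(k),\dots,u_{a+b}(k)$ and $v_0(k),\dots,v_{a+b}(k)$ (for every integer $k\geq 0$) such that for all $x$, \begin{align*} x^ap_k(x) &=u_0(k)p_{k+a}(x) + u_1(k)p_{k+a-1}(x)+\dots +u_{a+b}(k)p_{k-b}(x),\\ x^bq_k(x) &=v_0(k)q_{k+b}(x) + v_1(k)q_{k+b-1}(x)+\dots +v_{a+b}(k)q_{k-a}(x), \end{align*} with the convention $p_j=q_j=0$ for $j<0$, and these coefficients satisfy $$u_j(k)=v_{a+b-j}(k+a-j)$$ (whenever $k+a-j\geq 0$). Moreover, for every integer $n\geq 1$, every complex $x$ and every $y\geq 0$ (with $y^\theta\geq 0$) such that $x^a\neq y^a$, the Christoffel–Darboux formula $$\sum_{k=0}^{n-1}p_k(x)q_k(y^\theta)=\frac{1}{x^a-y^a}\left(\sum_{\ell=1}^{a}\sum_{k=n-\ell}^{n-1}u_{a-\ell}(k)p_{k+\ell}(x)q_k(y^\theta)-\sum_{\ell=1}^b\sum_{k=n-\ell}^{n-1}u_{a+\ell}(k+\ell)p_k(x)q_{k+\ell}(y^\theta)\right)$$ holds, where terms involving a polynomial with negative index are zero.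
   Context: For $\theta\geq 1$ and $w$ as in the claim, the biorthogonal polynomials $p_j(x)=\kappa_jx^j+\dots$ and $q_j(x)=\kappa_jx^j+\dots$ are the (unique) polynomials of exact degree $j$, with equal positive leading coefficients $\kappa_j$, satisfying $\int_0^{+\infty}p_j(x)q_k(x^\theta)w(x)\,dx=\delta_{jk}$ for all $j,k\geq 0$. (Existence and uniqueness holds since the bimoment matrices $\left(\int_0^\infty x^{k+j\theta}w(x)dx\right)_{j,k=0}^{n-1}$ are nonsingular.) *)

From HB Require Import structures.
From mathcomp Require Import all_boot all_order all_algebra.
From mathcomp Require Import all_classical all_reals all_analysis.
From mathcomp Require Import complex.
Set Implicit Arguments. Unset Strict Implicit. Unset Printing Implicit Defensive.
Import Order.TTheory GRing.Theory Num.Theory.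
Local Open Scope ring_scope.

Definition pz (R : nzRingType) (p : nat -> {poly R}) (i : int) : {poly R} :=
  match i with Posz n => p n | Negz _ => 0 end.

Definition biorthogonal (R : realType) (theta : R) (w : R -> R)
    (p q : nat -> {poly R}) : Prop :=
  (forall j, size (p j) = j.+1 /\ size (q j) = j.+1 /\
             lead_coef (p j) = lead_coef (q j) /\ 0 < lead_coef (p j)) /\
  (forall j k,
     (\int[@lebesgue_measure R]_(x in `]0%R, +oo[%classic)
        ((p j).[x] * (q k).[x `^ theta] * w x)%:E)%E = ((j == k)%:R)%:E).

Definition cevalp (R : rcfType) (p : {poly R}) (z : complex R) : complex R :=
  (map_poly (real_complex R) p).[z].

From HB Require Import structures.
From mathcomp Require Import all_boot all_order all_algebra.
From mathcomp Require Import all_classical all_reals all_analysis.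
From mathcomp Require Import complex measurable_realfun.
From mathcomp Require Import zify ring.
Import Order.TTheory GRing.Theory Num.Theory.
Local Open Scope ring_scope.
Set Implicit Arguments. Unset Strict Implicit. Unset Printing Implicit Defensive.

(* Write B(f, g) = int_0^oo f(x) g(x^theta) w(x) dx.  Since (x^theta)^b = x^a,
   multiplication by X^a on the left of B is adjoint to multiplication by X^b
   on the right.  Expanding X^a p_k in the basis (p_j), the coefficient of p_m
   is B(X^a p_k, q_m) = B(p_k, X^b q_m); it vanishes for m > k + a by the
   degree of X^a p_k and for m < k - b by the degree of X^b q_m.  This gives
   both recurrences, and reading the same number B(X^a p_k, q_m) in the two
   expansions gives u_j(k) = v_{a+b-j}(k+a-j).  Evaluating the recurrences at
   x and at y^theta (where (y^theta)^b = y^a), the Christoffel-Darboux sum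
   telescopes exactly as for ordinary orthogonal polynomials. *)

Lemma big_nat_slide (V : nmodType) (G : nat -> V) n l : (1 <= l)%N ->
  \sum_(n.+1 - l <= k < n.+1) G k + (if (l <= n)%N then G (n - l)%N else 0) =
  \sum_(n - l <= k < n) G k + G n.
Proof.
move=> l1; rewrite big_nat_recr /=; last by lia.
case: leqP => hl.
  have -> : (n.+1 - l = (n - l).+1)%N by lia.
  rewrite [in RHS]big_ltn; last by lia.
  by rewrite addrAC; congr (_ + _); exact: addrC.
have -> : (n.+1 - l = 0)%N by lia.
have -> : (n - l = 0)%N by lia.
by rewrite addr0.
Qed.

Lemma big_ord_split_at (V : nmodType) (F : nat -> V) a b :
  \sum_(j < (a + b).+1) F j =
  \sum_(1 <= l < a.+1) F (a - l)%N + F a + \sum_(1 <= l < b.+1) F (a + l)%N.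
Proof.
rewrite -(big_mkord xpredT) (big_cat_nat _ (n := a)) //=; last by lia.
rewrite [X in _ + X]big_ltn; last by lia.
rewrite addrA; congr (_ + _ + _).
  rewrite big_nat_rev /= big_add1 /=; apply: eq_big_nat => i /andP [h1 h2].
  by congr F; lia.
have -> : (a.+1 = 1 + a)%N by lia.
rewrite big_addn; have -> : ((a + b).+1 - a = b.+1)%N by lia.
by apply: eq_big_nat => i _; rewrite addnC.
Qed.

Lemma sum_if_eq_addn (V : nmodType) (F : nat -> V) N K m :
  \sum_(j < N) (if K == (m + j)%N then F j else 0) =
  if (m <= K)%N && (K - m < N)%N then F (K - m)%N else 0.
Proof.
elim: N => [|N IH]; first by rewrite big_ord0; case: ifP => //; lia.
rewrite big_ord_recr /= IH.
case: (eqVneq K (m + N)%N) => [->|hne].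
  have -> : (m + N - m = N)%N by lia.
  by rewrite leq_addr ltnn ltnSn /= add0r.
rewrite addr0; case: (boolP ((m <= K)%N && (K - m < N)%N)) => h.
  by have -> : (m <= K)%N && (K - m < N.+1)%N by lia.
by have -> : ((m <= K)%N && (K - m < N.+1)%N) = false by apply/negP; lia.
Qed.

Lemma sum_mul_kronecker (R : nzRingType) N (c : nat -> R) (i : nat) :
  \sum_(m < N) c m * ((m : nat) == i)%:R = if (i < N)%N then c i else 0.
Proof.
rewrite (eq_bigr (fun m : 'I_N => if i == (0 + m)%N then c m else 0)).
  by rewrite sum_if_eq_addn subn0.
by move=> m _; rewrite add0n eq_sym; case: eqP => _; rewrite ?mulr1 ?mulr0.
Qed.

(* [Q] satisfies the transposed recurrence: the matrix of multiplication by
   [Y] in the family [Q] is the transpose of that of [X] in the family [P]. *)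
Lemma christoffel_darboux_telescope (K : comNzRingType) (a b : nat)
    (U : nat -> nat -> K) (P Q : nat -> K) (X Y : K) :
  (forall n, X * P n =
     \sum_(1 <= l < a.+1) U (a - l)%N n * P (n + l)%N + U a n * P n
     + \sum_(1 <= l < b.+1)
         (if (l <= n)%N then U (a + l)%N n * P (n - l)%N else 0)) ->
  (forall n, Y * Q n =
     \sum_(1 <= l < b.+1) U (a + l)%N (n + l)%N * Q (n + l)%N + U a n * Q n
     + \sum_(1 <= l < a.+1)
         (if (l <= n)%N then U (a - l)%N (n - l)%N * Q (n - l)%N else 0)) ->
  forall n, (X - Y) * \sum_(k < n) P k * Q k =
    \sum_(1 <= l < a.+1) \sum_(n - l <= k < n) U (a - l)%N k * P (k + l)%N * Q k
  - \sum_(1 <= l < b.+1) \sum_(n - l <= k < n)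
      U (a + l)%N (k + l)%N * P k * Q (k + l)%N.
Proof.
move=> recP recQ; elim=> [|n IH].
  rewrite big_ord0 mulr0 !big1_seq ?subrr // => l _; rewrite big_geq //; lia.
rewrite big_ord_recr /= mulrDr IH.
set A1 := \sum_(1 <= l < a.+1) _.
set A2 := \sum_(1 <= l < b.+1) _.
have slideA : \sum_(1 <= l < a.+1) \sum_(n.+1 - l <= k < n.+1)
      U (a - l)%N k * P (k + l)%N * Q k
  = A1 + \sum_(1 <= l < a.+1) U (a - l)%N n * P (n + l)%N * Q n
    - \sum_(1 <= l < a.+1)
        (if (l <= n)%N then U (a - l)%N (n - l)%N * Q (n - l)%N else 0) * P n.
  rewrite /A1 -big_split -sumrB /=; apply: eq_big_nat => l /andP [l1 _].
  by rewrite -(big_nat_slide _ _ l1); case: leqP => hl; rewrite ?subnK //; ring.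
have slideB : \sum_(1 <= l < b.+1) \sum_(n.+1 - l <= k < n.+1)
      U (a + l)%N (k + l)%N * P k * Q (k + l)%N
  = A2 + \sum_(1 <= l < b.+1) U (a + l)%N (n + l)%N * P n * Q (n + l)%N
    - \sum_(1 <= l < b.+1)
        (if (l <= n)%N then U (a + l)%N n * P (n - l)%N else 0) * Q n.
  rewrite /A2 -big_split -sumrB /=; apply: eq_big_nat => l /andP [l1 _].
  by rewrite -(big_nat_slide _ _ l1); case: leqP => hl; rewrite ?subnK //; ring.
rewrite slideA slideB.
have -> : (X - Y) * (P n * Q n) = (X * P n) * Q n - (Y * Q n) * P n by ring.
rewrite recP recQ !mulrDl !mulr_suml.
have -> : \sum_(1 <= i < b.+1) U (a + i)%N (n + i)%N * Q (n + i)%N * P n =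
          \sum_(1 <= i < b.+1) U (a + i)%N (n + i)%N * P n * Q (n + i)%N.
  by apply: eq_bigr => i _; ring.
ring.
Qed.

Lemma addz_subz_nat (k a j : nat) : (j <= k + a)%N ->
  k%:Z + a%:Z - j%:Z = (k + a - j)%N%:Z.
Proof. by move=> h; rewrite -PoszD subzn. Qed.

Lemma eqz_addn_sub (k a j m : nat) :
  (k%:Z + a%:Z - j%:Z == m%:Z) = (k + a == m + j)%N.
Proof. by rewrite subr_eq -!PoszD eqz_nat. Qed.

Lemma pz_lt0 (R : nzRingType) (p : nat -> {poly R}) (i : int) :
  i < 0 -> pz p i = 0.
Proof. by case: i. Qed.

Lemma sum_pz_split (R : nzRingType) (p : nat -> {poly R}) (c : nat -> R)
    (a b k : nat) :
  \sum_(j < (a + b).+1) c j *: pz p (k%:Z + a%:Z - j%:Z) =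
    \sum_(1 <= l < a.+1) c (a - l)%N *: p (k + l)%N + c a *: p k
  + \sum_(1 <= l < b.+1)
      (if (l <= k)%N then c (a + l)%N *: p (k - l)%N else 0).
Proof.
rewrite (big_ord_split_at (fun j => c j *: pz p (k%:Z + a%:Z - j%:Z))).
congr (_ + _ + _).
- apply: eq_big_nat => l /andP [_ la]; rewrite addz_subz_nat; last by lia.
  by have -> : (k + a - (a - l) = k + l)%N by lia.
- by rewrite addz_subz_nat ?leq_addl // addnK.
- apply: eq_big_nat => l /andP [l1 _]; case: leqP => hl.
    rewrite addz_subz_nat; last by lia.
    by have -> : (k + a - (a + l) = k - l)%N by lia.
  by rewrite pz_lt0 ?scaler0 // -PoszD subr_lt0 ltz_nat; lia.
Qed.

Lemma poly_basis_expansion (R : fieldType) (p : nat -> {poly R}) :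
  (forall j, size (p j) = j.+1) ->
  forall N (f : {poly R}), (size f <= N)%N ->
  exists c : nat -> R, f = \sum_(m < N) c m *: p m.
Proof.
move=> size_p; elim=> [|N IH] f hf.
  by exists (fun=> 0); rewrite big_ord0; apply/eqP; rewrite -size_poly_leq0.
have lc0 : lead_coef (p N) != 0 by rewrite lead_coef_eq0 -size_poly_gt0 size_p.
set c0 := f`_N / lead_coef (p N).
have hs : (size (f - c0 *: p N)%R <= N)%N.
  apply/leq_sizeP => j hj; rewrite coefB coefZ.
  case: (ltngtP N j) => hNj.
  - rewrite !nth_default ?mulr0 ?subr0 ?size_p //; exact: leq_trans hf hNj.
  - by move: hj; rewrite leqNgt hNj.
  - by rewrite -hNj [(p N)`_N](_ : _ = lead_coef (p N)) ?divfK ?subrr //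
       lead_coefE size_p.
have [c hc] := IH _ hs.
exists (fun m => if m == N then c0 else c m); rewrite big_ord_recr /= eqxx.
rewrite (eq_bigr (fun i : 'I_N => c i *: p i)) => [|i _]; last by rewrite ltn_eqF.
by rewrite -hc subrK.
Qed.

Lemma size_Xn_mul (R : nzRingType) (f : {poly R}) n :
  f != 0 -> size ('X^n * f) = (size f + n)%N.
Proof. by move=> f0; rewrite -commr_polyXn size_mulXn // addnC. Qed.

Section Recurrences.
Variables (R : fieldType) (B : {poly R} -> {poly R} -> R)
  (p q : nat -> {poly R}) (a b : nat).
Hypothesis B_linearl : forall g c f1 f2, B (c *: f1 + f2) g = c * B f1 g + B f2 g.
Hypothesis B_linearr : forall f c g1 g2, B f (c *: g1 + g2) = c * B f g1 + B f g2.
Hypothesis size_p : forall j, size (p j) = j.+1.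
Hypothesis size_q : forall j, size (q j) = j.+1.
Hypothesis B_biorth : forall j k, B (p j) (q k) = (j == k)%:R.
Hypothesis B_mulXn : forall f g, B ('X^a * f) g = B f ('X^b * g).

Lemma B0l g : B 0 g = 0.
Proof. by have := B_linearl g (-1) 0 0; rewrite scaler0 add0r mulN1r addNr. Qed.

Lemma B0r f : B f 0 = 0.
Proof. by have := B_linearr f (-1) 0 0; rewrite scaler0 add0r mulN1r addNr. Qed.

Lemma B_suml (I : Type) (r : seq I) (c : I -> R) (F : I -> {poly R}) g :
  B (\sum_(i <- r) c i *: F i) g = \sum_(i <- r) c i * B (F i) g.
Proof.
elim: r => [|i r IH]; first by rewrite !big_nil B0l.
by rewrite !big_cons B_linearl IH.
Qed.

Lemma B_sumr (I : Type) (r : seq I) (c : I -> R) (F : I -> {poly R}) f :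
  B f (\sum_(i <- r) c i *: F i) = \sum_(i <- r) c i * B f (F i).
Proof.
elim: r => [|i r IH]; first by rewrite !big_nil B0r.
by rewrite !big_cons B_linearr IH.
Qed.

Lemma B_coefl N (c : nat -> R) i :
  B (\sum_(m < N) c m *: p m) (q i) = if (i < N)%N then c i else 0.
Proof. by rewrite B_suml; under eq_bigr do rewrite B_biorth; exact: sum_mul_kronecker. Qed.

Lemma B_coefr N (c : nat -> R) i :
  B (p i) (\sum_(m < N) c m *: q m) = if (i < N)%N then c i else 0.
Proof.
rewrite B_sumr; under eq_bigr do rewrite B_biorth eq_sym.
exact: sum_mul_kronecker.
Qed.

Lemma B_eq0_sizel (f : {poly R}) i : (size f <= i)%N -> B f (q i) = 0.
Proof.
move=> hf; have [c ->] := poly_basis_expansion size_p (leqnn (size f)).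
by rewrite B_coefl ltnNge hf.
Qed.

Lemma B_eq0_sizer (g : {poly R}) i : (size g <= i)%N -> B (p i) g = 0.
Proof.
move=> hg; have [c ->] := poly_basis_expansion size_q (leqnn (size g)).
by rewrite B_coefr ltnNge hg.
Qed.

Lemma B_subl f1 f2 g : B (f1 - f2) g = B f1 g - B f2 g.
Proof. by rewrite addrC -scaleN1r B_linearl mulN1r addrC. Qed.

Lemma B_subr f g1 g2 : B f (g1 - g2) = B f g1 - B f g2.
Proof. by rewrite addrC -scaleN1r B_linearr mulN1r addrC. Qed.

Lemma eq_poly_Bl (f g : {poly R}) : (forall m, B f (q m) = B g (q m)) -> f = g.
Proof.
move=> eqB; apply/eqP; rewrite -subr_eq0; apply/eqP.
have [c hc] := poly_basis_expansion size_p (leqnn (size (f - g)%R)).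
rewrite hc big1 // => i _.
have := B_coefl (size (f - g)%R) c i.
by rewrite -hc ltn_ord B_subl eqB subrr => <-; rewrite scale0r.
Qed.

Lemma eq_poly_Br (f g : {poly R}) : (forall m, B (p m) f = B (p m) g) -> f = g.
Proof.
move=> eqB; apply/eqP; rewrite -subr_eq0; apply/eqP.
have [c hc] := poly_basis_expansion size_q (leqnn (size (f - g)%R)).
rewrite hc big1 // => i _.
have := B_coefr (size (f - g)%R) c i.
by rewrite -hc ltn_ord B_subr eqB subrr => <-; rewrite scale0r.
Qed.

Lemma B_pzl i m : B (pz p i) (q m) = (i == m%:Z)%:R.
Proof.
by case: i => [n|n] /=; rewrite ?B_biorth ?eqz_nat ?B0l.
Qed.

Lemma B_pzr i m : B (p m) (pz q i) = (i == m%:Z)%:R.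
Proof. by case: i => [n|n] /=; rewrite ?B_biorth ?eqz_nat 1?eq_sym ?B0r. Qed.

(* For [j > k + a] the truncated index [k + a - j] is 0: the value is junk,
   but it only ever multiplies [pz p] at a negative index. *)
Definition recp_coef j k := B ('X^a * p k) (q (k + a - j)).
Definition recq_coef j k := B (p (k + b - j)) ('X^b * q k).

Local Notation u := recp_coef.
Local Notation v := recq_coef.

Lemma recp_recq_coef j k : (j <= a + b)%N -> (j <= k + a)%N ->
  u j k = v (a + b - j) (k + a - j).
Proof.
move=> jab jka; rewrite /recp_coef /recq_coef B_mulXn.
by have -> : (k + a - j + b - (a + b - j) = k)%N by lia.
Qed.

Lemma Xn_mul_p_rec k :
  'X^a * p k = \sum_(j < (a + b).+1) u j k *: pz p (k%:Z + a%:Z - j%:Z).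
Proof.
apply: eq_poly_Bl => m; rewrite B_suml.
under eq_bigr => j _ do rewrite B_pzl eqz_addn_sub.
rewrite (eq_bigr (fun j : 'I_(a + b).+1 => if (k + a == m + j)%N then u j k else 0));
  last by move=> j _; case: eqP; rewrite ?mulr1 ?mulr0.
rewrite (sum_if_eq_addn (fun j => u j k)); case: ifP => hm.
  by rewrite /recp_coef; have -> : (k + a - (k + a - m) = m)%N by lia.
have p0 : p k != 0 by rewrite -size_poly_gt0 size_p.
have q0 : q m != 0 by rewrite -size_poly_gt0 size_q.
case: (leqP m (k + a)) => hmk.
  by rewrite B_mulXn B_eq0_sizer // size_Xn_mul // size_q; lia.
by rewrite B_eq0_sizel // size_Xn_mul // size_p addSn.
Qed.

Lemma Xn_mul_q_rec k :
  'X^b * q k = \sum_(j < (a + b).+1) v j k *: pz q (k%:Z + b%:Z - j%:Z).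
Proof.
apply: eq_poly_Br => m; rewrite B_sumr.
under eq_bigr => j _ do rewrite B_pzr eqz_addn_sub.
rewrite (eq_bigr (fun j : 'I_(a + b).+1 => if (k + b == m + j)%N then v j k else 0));
  last by move=> j _; case: eqP; rewrite ?mulr1 ?mulr0.
rewrite (sum_if_eq_addn (fun j => v j k)); case: ifP => hm.
  by rewrite /recq_coef; have -> : (k + b - (k + b - m) = m)%N by lia.
have p0 : p m != 0 by rewrite -size_poly_gt0 size_p.
have q0 : q k != 0 by rewrite -size_poly_gt0 size_q.
case: (leqP m (k + b)) => hmk.
  by rewrite -B_mulXn B_eq0_sizel // size_Xn_mul // size_p; lia.
by rewrite B_eq0_sizer // size_Xn_mul // size_q addSn.
Qed.

Lemma Xn_mul_p_split k :
  'X^a * p k =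
    \sum_(1 <= l < a.+1) u (a - l)%N k *: p (k + l)%N + u a k *: p k
  + \sum_(1 <= l < b.+1) (if (l <= k)%N then u (a + l)%N k *: p (k - l)%N else 0).
Proof. by rewrite Xn_mul_p_rec (sum_pz_split _ (fun j => u j k)). Qed.

Lemma Xn_mul_q_split k :
  'X^b * q k =
    \sum_(1 <= l < b.+1) u (a + l)%N (k + l)%N *: q (k + l)%N + u a k *: q k
  + \sum_(1 <= l < a.+1)
      (if (l <= k)%N then u (a - l)%N (k - l)%N *: q (k - l)%N else 0).
Proof.
rewrite Xn_mul_q_rec addnC (sum_pz_split _ (fun j => v j k)).
congr (_ + _ + _).
- apply: eq_big_nat => l /andP [_ lb]; rewrite recp_recq_coef; [|lia|lia].
  have -> : (a + b - (a + l) = b - l)%N by lia.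
  by have -> : (k + l + a - (a + l) = k)%N by lia.
- by rewrite recp_recq_coef ?leq_addr ?leq_addl // addKn addnK.
- apply: eq_big_nat => l /andP [_ la]; case: leqP => // lk.
  rewrite recp_recq_coef; [|lia|lia].
  have -> : (a + b - (a - l) = b + l)%N by lia.
  by have -> : (k - l + a - (a - l) = k)%N by lia.
Qed.

Lemma biorth_christoffel_darboux (K : comNzRingType)
    (phi psi : {rmorphism {poly R} -> K}) (iota : R -> K) :
  (forall c, phi c%:P = iota c) -> (forall c, psi c%:P = iota c) ->
  forall n, (phi 'X^a - psi 'X^b) * \sum_(k < n) phi (p k) * psi (q k) =
    \sum_(1 <= l < a.+1) \sum_(n - l <= k < n)
      iota (u (a - l)%N k) * phi (p (k + l)%N) * psi (q k)
  - \sum_(1 <= l < b.+1) \sum_(n - l <= k < n)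
      iota (u (a + l)%N (k + l)%N) * phi (p k) * psi (q (k + l)%N).
Proof.
move=> phiC psiC.
have phiZ c f : phi (c *: f) = iota c * phi f by rewrite -mul_polyC rmorphM phiC.
have psiZ c f : psi (c *: f) = iota c * psi f by rewrite -mul_polyC rmorphM psiC.
apply: (christoffel_darboux_telescope (U := fun j k => iota (u j k))
  (P := fun k => phi (p k)) (Q := fun k => psi (q k))) => n /=.
  rewrite -rmorphM Xn_mul_p_split !rmorphD !rmorph_sum phiZ.
  by congr (_ + _ + _); apply: eq_bigr => l _; rewrite ?phiZ // (fun_if phi) phiZ rmorph0.
rewrite -rmorphM Xn_mul_q_split !rmorphD !rmorph_sum psiZ.
by congr (_ + _ + _); apply: eq_bigr => l _; rewrite ?psiZ // (fun_if psi) psiZ rmorph0.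
Qed.

End Recurrences.

Lemma powR_le1D_exprn (R : realType) (x s : R) (N : nat) :
  0 < x -> 0 <= s -> s <= N%:R -> x `^ s <= 1 + x ^+ N.
Proof.
move=> x0 s0 sN; case: (lerP x 1) => hx.
  have := @ger_powR _ x (ltac:(by rewrite x0 hx)) 0 s s0.
  rewrite powRr0 => h; apply: (le_trans h); by rewrite lerDl exprn_ge0 // ltW.
have := @ler_powR _ x (ltW hx) s N%:R sN; rewrite powR_mulrn ?(ltW x0) // => h.
by apply: (le_trans h); rewrite lerDr.
Qed.

Lemma exprn_powR_ratio (R : realType) (y : R) (a b : nat) : 0 <= y -> (0 < b)%N ->
  (y `^ (a%:R / b%:R)) ^+ b = y ^+ a.
Proof.
move=> y0 b0.
by rewrite -powR_mulrn ?powR_ge0 // -powRrM divfK ?pnatr_eq0 -?lt0n // powR_mulrn.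
Qed.

Section Bimoment.
Variables (R : realType) (th : R) (w : R -> R).
Hypothesis th_ge0 : 0 <= th.
Hypothesis w_gt0 : forall x : R, 0 < x -> 0 < w x.
Hypothesis w_moments : forall k : nat,
  (@lebesgue_measure R).-integrable `]0%R, +oo[%classic (fun x => (x ^+ k * w x)%:E).
Local Notation D := (`]0%R, +oo[%classic : set R).
Local Notation mu := (@lebesgue_measure R).

Let mD : measurable (D : set (measurableTypeR R)). Proof. exact: measurable_itv. Qed.

Let gt0_in_D x : x \in D -> 0 < x.
Proof. by rewrite inE /= in_itv /= andbT. Qed.

Let integrable_w : mu.-integrable D (fun x => (w x)%:E).
Proof. by apply: (eq_integrable mD _ _ _ (w_moments 0)) => x _; rewrite mul1r. Qed.

Lemma integrable_powR_w s : 0 <= s -> mu.-integrable D (fun x => (x `^ s * w x)%:E).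
Proof.
move=> s0; set N := (Num.truncn s).+1.
have sN : s <= N%:R by apply: ltW; exact: truncnS_gt.
apply: (@le_integrable _ _ _ _ _ mD _ (fun x => ((w x)%:E + (x ^+ N * w x)%:E)%E)).
- apply/measurable_EFinP; apply: measurable_funM.
    by apply: measurable_funTS; apply: measurable_powR.
  by have /integrableP [/measurable_EFinP] := integrable_w.
- move=> x /= Dx; have x0 : 0 < x by move: Dx; rewrite /= in_itv /= andbT.
  have w0 := ltW (w_gt0 x0).
  rewrite lee_fin ger0_norm ?mulr_ge0 ?powR_ge0 //.
  rewrite ger0_norm ?addr_ge0 ?mulr_ge0 ?exprn_ge0 ?(ltW x0) //.
  rewrite -[X in _ <= X + _]mul1r -mulrDl ler_wpM2r //.
  exact: powR_le1D_exprn.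
- exact: (integrableD mD integrable_w (w_moments N)).
Qed.

Lemma integrable_mixed_monomial i j :
  mu.-integrable D (fun x => (x ^+ i * (x `^ th) ^+ j * w x)%:E).
Proof.
apply: (eq_integrable mD _ _ _ (integrable_powR_w (s := i%:R + th * j%:R) _));
  last by rewrite addr_ge0 ?mulr_ge0.
move=> x /gt0_in_D x0; congr EFin; congr (_ * _).
rewrite powRD; last by rewrite (gt_eqF x0) /= implybT.
by rewrite powR_mulrn ?(ltW x0) // powRrM powR_mulrn // powR_ge0.
Qed.

Lemma integrable_bimoment (f g : {poly R}) :
  mu.-integrable D (fun x => (f.[x] * g.[x `^ th] * w x)%:E).
Proof.
have hint := @integrable_sum _ _ _ mu _ mD _ (index_enum 'I_(size f)) xpredT
  (fun i x => \sum_(j < size g)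
     ((f`_i * g`_j)%:E * (x ^+ i * (x `^ th) ^+ j * w x)%:E))%E.
apply: (eq_integrable mD _ _ _ (hint _)); last first.
  move=> i _; apply: (@integrable_sum _ _ _ mu _ mD) => j _.
  exact: (integrableZl mD (f`_i * g`_j) (integrable_mixed_monomial i j)).
move=> x _ /=; under eq_bigr do under eq_bigr do rewrite -EFinM.
under eq_bigr do rewrite sumEFin.
rewrite sumEFin !horner_coef mulr_suml mulr_suml; congr EFin.
apply: eq_bigr => i _; rewrite mulr_sumr mulr_suml.
by apply: eq_bigr => j _; ring.
Qed.

Definition bimoment (f g : {poly R}) : R :=
  Rintegral mu D (fun x => f.[x] * g.[x `^ th] * w x).

Lemma bimoment_linearl g c f1 f2 :
  bimoment (c *: f1 + f2) g = c * bimoment f1 g + bimoment f2 g.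
Proof.
have -> : bimoment (c *: f1 + f2) g = bimoment (c *: f1) g + bimoment f2 g.
  rewrite /bimoment -RintegralD ?integrable_bimoment //.
  by apply: eq_Rintegral => x _; rewrite hornerD; ring.
have -> // : bimoment (c *: f1) g = c * bimoment f1 g.
rewrite /bimoment -RintegralZl ?integrable_bimoment //.
by apply: eq_Rintegral => x _; rewrite hornerZ; ring.
Qed.

Lemma bimoment_linearr f c g1 g2 :
  bimoment f (c *: g1 + g2) = c * bimoment f g1 + bimoment f g2.
Proof.
have -> : bimoment f (c *: g1 + g2) = bimoment f (c *: g1) + bimoment f g2.
  rewrite /bimoment -RintegralD ?integrable_bimoment //.
  by apply: eq_Rintegral => x _; rewrite hornerD; ring.
have -> // : bimoment f (c *: g1) = c * bimoment f g1.
rewrite /bimoment -RintegralZl ?integrable_bimoment //.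
by apply: eq_Rintegral => x _; rewrite hornerZ; ring.
Qed.

Lemma bimoment_mulXn (a b : nat) f g : th * b%:R = a%:R ->
  bimoment ('X^a * f) g = bimoment f ('X^b * g).
Proof.
move=> thb; apply: eq_Rintegral => x /gt0_in_D x0.
rewrite !hornerM !hornerXn.
have -> : (x `^ th) ^+ b = x ^+ a.
  by rewrite -powR_mulrn ?powR_ge0 // -powRrM thb powR_mulrn // ltW.
ring.
Qed.

End Bimoment.

Local Open Scope complex_scope.
Local Open Scope ring_scope.

Theorem theorem1p1 (R : realType) (a b : nat) (w : R -> R)
    (p q : nat -> {poly R}) :
  (0 < b)%N -> (b < a)%N ->
  (forall x : R, 0 < x -> 0 < w x) ->
  (forall k : nat, (@lebesgue_measure R).-integrable `]0%R, +oo[%classic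
                     (fun x => (x ^+ k * w x)%:E)) ->
  biorthogonal (a%:R / b%:R) w p q ->
  exists u v : nat -> nat -> R,
    (forall k : nat,
       'X^a * p k = \sum_(j < (a + b).+1)
                      u j k *: pz p (k%:Z + a%:Z - j%:Z)) /\
    (forall k : nat,
       'X^b * q k = \sum_(j < (a + b).+1)
                      v j k *: pz q (k%:Z + b%:Z - j%:Z)) /\
    (forall j k : nat, (j <= a + b)%N -> (j <= k + a)%N ->
       u j k = v (a + b - j)%N (k + a - j)%N) /\
    (forall (n : nat) (x : complex R) (y : R), (1 <= n)%N -> 0 <= y ->
       x ^+ a != (y%:C) ^+ a ->
       \sum_(k < n) cevalp (p k) x * ((q k).[y `^ (a%:R / b%:R)])%:C =
       (x ^+ a - (y%:C) ^+ a)^-1 *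
         (\sum_(1 <= l < a.+1) \sum_(n - l <= k < n)
             (u (a - l)%N k)%:C * cevalp (p (k + l)%N) x
               * ((q k).[y `^ (a%:R / b%:R)])%:C
          - \sum_(1 <= l < b.+1) \sum_(n - l <= k < n)
             (u (a + l)%N (k + l)%N)%:C * cevalp (p k) x
               * ((q (k + l)%N).[y `^ (a%:R / b%:R)])%:C)).
Proof.
move=> b_gt0 _ w_gt0 w_moments [size_pq biorth].
set th := a%:R / b%:R.
have th_ge0 : 0 <= th by rewrite divr_ge0.
have thb : th * b%:R = a%:R by rewrite divfK // pnatr_eq0 -lt0n.
have size_p j : size (p j) = j.+1 by case: (size_pq j).
have size_q j : size (q j) = j.+1 by case: (size_pq j) => _ [].
have B_biorth j k : bimoment th w (p j) (q k) = (j == k)%:R.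
  by rewrite /bimoment /Rintegral biorth.
have BL := bimoment_linearl th_ge0 w_gt0 w_moments.
have BR := bimoment_linearr th_ge0 w_gt0 w_moments.
have BX f g := @bimoment_mulXn _ th w a b f g thb.
exists (recp_coef (bimoment th w) p q a), (recq_coef (bimoment th w) p q b).
split; first exact: Xn_mul_p_rec.
split; first exact: Xn_mul_q_rec.
split; first exact: recp_recq_coef.
move=> n x y _ y_ge0 hne.
have hne0 : x ^+ a - y%:C ^+ a != 0 by rewrite subr_eq0.
apply: (mulfI hne0); rewrite mulrA mulfV // mul1r.
set Y := y `^ th.
have phiX : (horner_eval x \o map_poly (real_complex R)) 'X^a = x ^+ a.
  by rewrite /= map_polyXn horner_evalE hornerXn.
have psiX : (real_complex R \o horner_eval Y) 'X^b = y%:C ^+ a.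
  by rewrite /= horner_evalE hornerXn exprn_powR_ratio // rmorphXn.
rewrite -phiX -psiX.
apply: (biorth_christoffel_darboux BL BR size_p size_q B_biorth BX) => c /=.
  by rewrite map_polyC horner_evalE hornerC.
by rewrite horner_evalE hornerC.
Qed.
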